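(* Let $0\le t_r\le n$ and suppose at most $f\le n-t_r$ of the $n$ nodes fail. Then the algorithm TLCR described in the context, where the $k$-th call to TLCR on a node constitutes that node's $k$-th logical time-step, implements a $\mathrm{TSB}(t_r,0,0)$ communication primitive.
   Context: Asynchronous network model. There are $n$ nodes numbered $1,\dots,n$; nodes may fail only by crashing permanently, after which they send no messages. A network-level Broadcast sends a message to all $n$ nodes (including the sender). Every message sent to a node that does not fail is eventually delivered after an arbitrary finite delay, and messages between each pair of nodes are delivered in the order sent. $\mathrm{Receive}()$ waits for and returns the next delivered message. Algorithm TLCR (node $i$, receive threshold $t_r$). Persistent state: a list $\vec R$ of sets, initially the one-element list $[\{\}]$; $\vec R_k$ denotes its $k$-th element. On a call $\mathrm{TLCR}(m)$: append $\{\}$ to $\vec R$ and let $s=|\vec R|$; network-broadcast $\langle i,m,s,\vec R_{s-1}\rangle$; while $|\vec R_s|<t_r$: receive $\langle j,m',s',R'\rangle$; if $s'=s$, set $\vec R_s\leftarrow\vec R_s\cup\{\langle j,m'\rangle\}$; else if $s'>s$, set $\vec R_s\leftarrow\vec R_s\cup R'$ (messages with $s'<s$ are ignored). Return $(\{m'\mid\langle j,m'\rangle\in\vec R_s\},\{\})$. Threshold synchronous broadcast. A primitive, called once per logical time-step by each non-failed node with a message $m$ and returning a pair $(R,B)$ of message sets, provides $\mathrm{TSB}(t_r,t_b,t_s)$ if: (lock-step synchrony) a call at step $s$ returns (completing step $s$) unless the node fails first; (receive threshold) if node $i$'s call at step $s$ returns $(R,B)$, there is $N_R\subseteq\{1,\dots,n\}$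 with $|N_R|\ge t_r$ such that $R$ is exactly the set of messages broadcast by the nodes of $N_R$ in step $s$; (broadcast threshold) there is $N_B\subseteq\{1,\dots,n\}$ with $|N_B|\ge t_b$ such that $B$ is exactly the set of messages broadcast by the nodes of $N_B$ in step $s$; (spread threshold) each $m'\in B$ returned to any node at step $s$ is contained in the receive sets $R$ returned in step $s$ to at least $t_s$ nodes (counting nodes that fail before completing step $s$ but would otherwise have received $m'$). *)

From mathcomp Require Import all_boot.
Set Implicit Arguments. Unset Strict Implicit. Unset Printing Implicit Defensive.

Section Model.
Variables (n : nat) (M : eqType).

Record Msg := mkMsg { msrc : 'I_n; mbody : M; mstep : nat; mset : seq ('I_n * M) }.

(* Local state of a node:
   Rv      : the persistent list R (R_k = nth [::] Rv k.-1, 1-based), initially [:: [::]]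
   waiting : the node is inside a call to TLCR (in the receive loop)
   crashed : the node has crashed
   hist    : the messages m passed to its successive TLCR calls (k-th call = k-th entry) *)
Record Node := mkNode { Rv : seq (seq ('I_n * M)); waiting : bool; crashed : bool; hist : seq M }.

(* Global state: local states, FIFO channels chan j i (from j to i, head = oldest),
   and per-node inbox of delivered-but-not-yet-received messages (head = next). *)
Record State := mkState { nd : 'I_n -> Node; chan : 'I_n -> 'I_n -> seq Msg; inbox : 'I_n -> seq Msg }.

Definition upd {T : Type} (f : 'I_n -> T) (i : 'I_n) (x : T) : 'I_n -> T :=
  fun j => if j == i then x else f j.

Definition init : State :=
  mkState (fun _ => mkNode [:: [::]] false false [::]) (fun _ _ => [::]) (fun _ => [::]).

Definition rcard (r : seq ('I_n * M)) : nat := size (undup r).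

Inductive label :=
| LCall of 'I_n & M                       (* node calls TLCR(m): append {}, broadcast *)
| LCallCrash of 'I_n & M & {set 'I_n}     (* node calls TLCR(m), its broadcast reaches only
                                             the given subset, and it crashes *)
| LCrash of 'I_n
| LDeliver of 'I_n & 'I_n                 (* LDeliver j i: deliver head of chan j i to i *)
| LRecv of 'I_n.                          (* node executes Receive() in its loop *)

Variable tr : nat.

Definition call_node (i : 'I_n) (x : Node) (m : M) : Node * Msg :=
  let Rl := rcons (Rv x) [::] in
  let s := size Rl in
  let msg := mkMsg i m s (nth [::] Rl (s - 2)) in
  (mkNode Rl (rcard (nth [::] Rl s.-1) < tr) (crashed x) (rcons (hist x) m), msg).

Definition recv_node (x : Node) (msg : Msg) : Node :=
  let s := size (Rv x) in
  let Rs := nth [::] (Rv x) s.-1 in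
  let Rs' := if mstep msg == s then rcons Rs (msrc msg, mbody msg)
             else if s < mstep msg then Rs ++ mset msg else Rs in
  mkNode (set_nth [::] (Rv x) s.-1 Rs') (rcard Rs' < tr) (crashed x) (hist x).

Definition set_crashed (x : Node) : Node := mkNode (Rv x) (waiting x) true (hist x).

Definition apply (l : label) (st : State) : option State :=
  match l with
  | LCall i m =>
      let x := nd st i in
      if ~~ crashed x && ~~ waiting x then
        let (x', msg) := call_node i x m in
        Some (mkState (upd (nd st) i x')
                      (fun j k => if j == i then rcons (chan st j k) msg else chan st j k)
                      (inbox st))
      else None
  | LCallCrash i m Sd =>
      let x := nd st i in
      if ~~ crashed x && ~~ waiting x then
        let (x', msg) := call_node i x m in
        Some (mkState (upd (nd st) i (set_crashed x'))
                      (fun j k => if (j == i) && (k \in Sd) then rcons (chan st j k) msg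
                                  else chan st j k)
                      (inbox st))
      else None
  | LCrash i =>
      let x := nd st i in
      if ~~ crashed x then Some (mkState (upd (nd st) i (set_crashed x)) (chan st) (inbox st))
      else None
  | LDeliver j i =>
      match chan st j i with
      | msg :: rest =>
          Some (mkState (nd st)
                        (fun a b => if (a == j) && (b == i) then rest else chan st a b)
                        (upd (inbox st) i (rcons (inbox st i) msg)))
      | [::] => None
      end
  | LRecv i =>
      let x := nd st i in
      if ~~ crashed x && waiting x then
        match inbox st i with
        | msg :: rest => Some (mkState (upd (nd st) i (recv_node x msg)) (chan st)
                                       (upd (inbox st) i rest))
        | [::] => None
        end
      else None
  end.

(* An (infinite) execution: a sequence of states and of actions (None = stuttering). *)
Definition execution (ex : nat -> State) (lab : nat -> option label) : Prop :=
  ex 0 = init /\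
  forall t, match lab t with
            | None => ex t.+1 = ex t
            | Some l => apply l (ex t) = Some (ex t.+1)
            end.

Definition correct (ex : nat -> State) (i : 'I_n) : Prop :=
  forall t, ~~ crashed (nd (ex t) i).

(* Fairness: every message sent to a non-failing node is eventually delivered;
   a non-failing node waiting in Receive() with a delivered message eventually
   receives it; a non-failing node eventually makes its next call to TLCR
   (TLCR is called once per logical time-step by each non-failed node). *)
Definition fair (ex : nat -> State) (lab : nat -> option label) : Prop :=
  (forall t (j i : 'I_n), correct ex i -> chan (ex t) j i <> [::] ->
     exists2 t', t <= t' & lab t' = Some (LDeliver j i)) /\
  (forall t (i : 'I_n), correct ex i -> waiting (nd (ex t) i) -> inbox (ex t) i <> [::] ->
     exists2 t', t <= t' & lab t' = Some (LRecv i)) /\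
  (forall t (i : 'I_n), correct ex i -> ~~ waiting (nd (ex t) i) ->
     exists2 t', t <= t' & exists m, lab t' = Some (LCall i m)).

Definition at_most_fail (f : nat) (ex : nat -> State) : Prop :=
  exists F : {set 'I_n}, #|F| <= f /\ forall i t, crashed (nd (ex t) i) -> i \in F.

(* Logical time-steps are numbered k = 1, 2, ...: the k-th call is step k. *)
Definition bcast (ex : nat -> State) (j : 'I_n) (k : nat) (m : M) : Prop :=
  exists t, k <= size (hist (nd (ex t) j)) /\ nth m (hist (nd (ex t) j)) k.-1 = m.

Definition called (ex : nat -> State) (i : 'I_n) (k : nat) : Prop :=
  exists t, k <= size (hist (nd (ex t) i)).

Definition returned (st : State) (i : 'I_n) (k : nat) : bool :=
  let x := nd st i in (k < size (hist x)) || ((k == size (hist x)) && ~~ waiting x).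

(* TSB(t_r,t_b,t_s), for return values given by retR / retB (the sets R, B
   returned by node i for step k, read in the state right after the return). *)
Definition TSB (tr tb ts : nat) (ex : nat -> State)
    (retR retB : State -> 'I_n -> nat -> M -> Prop) : Prop :=
  (forall i k, 0 < k -> called ex i k ->
     exists t, returned (ex t) i k \/ crashed (nd (ex t) i)) /\
  (forall i k t, 0 < k -> ~~ returned (ex t) i k -> returned (ex t.+1) i k ->
     (exists NR : {set 'I_n}, tr <= #|NR| /\
        (forall j, j \in NR -> exists m, bcast ex j k m) /\
        (forall m, retR (ex t.+1) i k m <-> exists2 j, j \in NR & bcast ex j k m)) /\
     (exists NB : {set 'I_n}, tb <= #|NB| /\
        (forall j, j \in NB -> exists m, bcast ex j k m) /\
        (forall m, retB (ex t.+1) i k m <-> exists2 j, j \in NB & bcast ex j k m)) /\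
     (forall m, retB (ex t.+1) i k m ->
        exists T : {set 'I_n}, ts <= #|T| /\
          forall j, j \in T ->
            (exists t', ~~ returned (ex t') j k /\ returned (ex t'.+1) j k /\
                        retR (ex t'.+1) j k m) \/
            ((exists t', crashed (nd (ex t') j)) /\ forall t', ~~ returned (ex t') j k))).

(* The pair returned by TLCR at logical step k: ({m' | <j,m'> in R_{k+1}}, {}),
   since the k-th call uses index s = k+1 of the list R. *)
Definition tlcrR (st : State) (i : 'I_n) (k : nat) (m : M) : Prop :=
  exists j : 'I_n, (j, m) \in nth [::] (Rv (nd st i)) k.
Definition tlcrB (st : State) (i : 'I_n) (k : nat) (m : M) : Prop := False.

End Model.

(* Safety is an inductive invariant of the reachable states.  Every pair <j, m>
   stored in a node's set for step k was broadcast by j at step k, and every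
   message in transit for step k+1 >= 2 carries the sender's returned set for
   step k, which has at least t_r pairs.  Since channels are FIFO and a node
   leaves its loop as soon as it sees a message of a later step, a node never
   processes a message more than one step ahead of it; so the set R' it merges
   belongs to its own step.  A returned set thus has at least t_r pairs with
   distinct senders, each one the step-k broadcast of its sender.

   Liveness is proved by induction on the step k.  If some correct node returns
   from step k, its step-(k+1) message carries its returned set and releases
   every correct node still waiting in step k.  Otherwise, take the first correct
   node to start step k.  No correct node had sent its step-k message before that
   moment, so this node, waiting forever, processes the step-k message of each of
   the n - f >= t_r correct nodes and reaches the threshold: a contradiction. *)

From HB Require Import structures.
From mathcomp Require Import all_boot zify.
From Stdlib Require Import Classical.
Set Implicit Arguments. Unset Strict Implicit. Unset Printing Implicit Defensive.

Lemma least_after (P : nat -> Prop) t t1 : t <= t1 -> P t1 ->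
  exists t0, [/\ t <= t0, P t0 & forall s, t <= s < t0 -> ~ P s].
Proof.
move=> tt1 Pt1; apply: NNPP => none.
suff : forall s, t <= s -> ~ P s by move/(_ t1 tt1).
elim/ltn_ind => s IH ts Ps; apply: none; exists s; split=> // r /andP[tr rs].
exact: IH.
Qed.

Lemma eventually_forall (T : finType) (A : {set T}) (Q : T -> nat -> Prop) :
  (forall j, j \in A -> exists t, forall t', t <= t' -> Q j t') ->
  exists t, forall j t', j \in A -> t <= t' -> Q j t'.
Proof.
move=> H; suff /(_ (enum A)) [|t Ht] : forall s : seq T, {subset s <= A} ->
    exists t, forall j t', j \in s -> t <= t' -> Q j t'.
- by move=> j; rewrite mem_enum.
- by exists t => j t' jA; apply: Ht; rewrite mem_enum.
elim=> [|a s IH] sA; first by exists 0.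
have [ta Ha] := H a (sA a (mem_head a s)).
have [ts Hs] := IH (fun j js => sA j (@mem_behead _ (a :: s) j js)).
exists (maxn ta ts) => j t'; rewrite inE => /orP[/eqP -> | js] le.
  by apply: Ha; apply: leq_trans le; apply: leq_maxl.
by apply: Hs => //; apply: leq_trans le; apply: leq_maxr.
Qed.

Lemma nth_rcons_nil_subset (T : eqType) (s : seq (seq T)) k :
  {subset nth [::] s k <= nth [::] (rcons s [::]) k}.
Proof.
move=> p; rewrite nth_rcons; case: ltnP => // /(nth_default [::]) ->.
by rewrite in_nil.
Qed.

Lemma card_le_size_undup (X : finType) (Y : eqType) (A : {set X}) (R : seq (X * Y)) :
  {in A, forall x, exists y, (x, y) \in R} -> #|A| <= size (undup R).
Proof.
move=> AR; rewrite -(size_map fst); apply: leq_trans (card_size _).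
apply: subset_leq_card; apply/subsetP => x /AR[y xyR].
by apply/mapP; exists (x, y); rewrite // mem_undup.
Qed.

Lemma size_undup_le_card_fst (X : finType) (Y : eqType) (R : seq (X * Y)) :
  {in R &, injective fst} -> size (undup R) <= #|[set x | x \in map fst R]|.
Proof.
move=> fst_inj; have uR : uniq (map fst (undup R)).
  by rewrite map_inj_in_uniq ?undup_uniq // => p q; rewrite !mem_undup; apply: fst_inj.
rewrite -(size_map fst) -(card_uniqP uR); apply: subset_leq_card; apply/subsetP => x.
by move=> /mapP[p pR ->]; rewrite inE; apply/mapP; exists p; rewrite // -mem_undup.
Qed.

Definition msg_tuple n (M : eqType) (g : Msg n M) := (msrc g, mbody g, mstep g, mset g).
Definition tuple_msg n (M : eqType) (x : 'I_n * M * nat * seq ('I_n * M)) : Msg n M :=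
  let: (j, m, s, R) := x in mkMsg j m s R.
Lemma msg_tupleK n M : cancel (@msg_tuple n M) (@tuple_msg n M). Proof. by case. Qed.
HB.instance Definition _ n M := Equality.copy (Msg n M) (can_type (@msg_tupleK n M)).

Section Protocol.
Variables (n : nat) (M : eqType) (tr : nat).
Local Notation St := (State n M).
Local Notation Mg := (Msg n M).
Local Notation Nd := (Node n M).

Definition cur_R (x : Nd) := nth [::] (Rv x) (size (Rv x)).-1.
Definition call_msg (i : 'I_n) (x : Nd) (m : M) : Mg :=
  mkMsg i m (size (Rv x)).+1 (cur_R x).
Definition call_state (x : Nd) (m : M) : Nd :=
  mkNode (rcons (Rv x) [::]) (0 < tr) (crashed x) (rcons (hist x) m).

Lemma call_nodeE i x m : call_node tr i x m = (call_state x m, call_msg i x m).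
Proof.
rewrite /call_node /call_state /call_msg /cur_R size_rcons nth_rcons ltnn eqxx /=.
by rewrite subn2 nth_rcons; case: (Rv x) => [|r s] //=; rewrite ltnS leqnn.
Qed.

Lemma updE T (f : 'I_n -> T) i x j : upd f i x j = if j == i then x else f j.
Proof. by []. Qed.

Lemma apply_callE i m (st st' : St) : apply tr (LCall i m) st = Some st' ->
  [/\ ~~ crashed (nd st i), ~~ waiting (nd st i) &
      st' = mkState (upd (nd st) i (call_state (nd st i) m))
        (fun j k => if j == i then rcons (chan st j k) (call_msg i (nd st i) m) else chan st j k)
        (inbox st)].
Proof. by cbn -[call_node]; rewrite call_nodeE; case: ifP => // /andP[? ?] [<-]. Qed.

Lemma apply_call_crashE i m A (st st' : St) : apply tr (LCallCrash i m A) st = Some st' ->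
  [/\ ~~ crashed (nd st i), ~~ waiting (nd st i) &
      st' = mkState (upd (nd st) i (set_crashed (call_state (nd st i) m)))
        (fun j k => if (j == i) && (k \in A) then rcons (chan st j k) (call_msg i (nd st i) m)
                    else chan st j k)
        (inbox st)].
Proof. by cbn -[call_node]; rewrite call_nodeE; case: ifP => // /andP[? ?] [<-]. Qed.

Lemma apply_crashE i (st st' : St) : apply tr (LCrash M i) st = Some st' ->
  ~~ crashed (nd st i) /\
  st' = mkState (upd (nd st) i (set_crashed (nd st i))) (chan st) (inbox st).
Proof. by rewrite /=; case: ifP => // ? [<-]. Qed.

Lemma apply_deliverE j i (st st' : St) : apply tr (LDeliver M j i) st = Some st' ->
  exists g rest, chan st j i = g :: rest /\
    st' = mkState (nd st) (fun a b => if (a == j) && (b == i) then rest else chan st a b)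
            (upd (inbox st) i (rcons (inbox st i) g)).
Proof. by rewrite /=; case: (chan st j i) => [|g rest] // [<-]; exists g, rest. Qed.

Lemma apply_recvE i (st st' : St) : apply tr (LRecv M i) st = Some st' ->
  [/\ ~~ crashed (nd st i), waiting (nd st i) &
      exists g rest, inbox st i = g :: rest /\
        st' = mkState (upd (nd st) i (recv_node tr (nd st i) g)) (chan st)
                (upd (inbox st) i rest)].
Proof.
rewrite /=; case: ifP => // /andP[? ?]; case: (inbox st i) => [|g rest] // [<-].
by split => //; exists g, rest.
Qed.

Variant node_step_spec (x x' : Nd) (inb : seq Mg) : Prop :=
  | NodeKeep of x' = x
  | NodeCrash of x' = set_crashed x
  | NodeCall m of ~~ crashed x & ~~ waiting x & hist x' = rcons (hist x) m
      & Rv x' = rcons (Rv x) [::] & waiting x' = (0 < tr)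
  | NodeRecv g rest of ~~ crashed x & waiting x & inb = g :: rest & x' = recv_node tr x g.

Lemma node_stepP l (st st' : St) i : apply tr l st = Some st' ->
  node_step_spec (nd st i) (nd st' i) (inbox st i).
Proof.
case: l => [a m|a m A|a|a b|a].
- case/apply_callE => nc nw ->; rewrite /= updE.
  by case: eqP => [->|_]; [exact: NodeCall | exact: NodeKeep].
- case/apply_call_crashE => nc nw ->; rewrite /= updE.
  by case: eqP => [->|_]; [exact: NodeCall | exact: NodeKeep].
- case/apply_crashE => _ ->; rewrite /= updE.
  by case: eqP => [->|_]; [exact: NodeCrash | exact: NodeKeep].
- by case/apply_deliverE => g [rest [_ ->]]; exact: NodeKeep.
- case/apply_recvE => nc w [g [rest [E ->]]]; rewrite /= updE.
  by case: eqP => [->|_]; [exact: (NodeRecv _ _ E) | exact: NodeKeep].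
Qed.

Lemma size_recv_node (x : Nd) g : 0 < size (Rv x) -> size (Rv (recv_node tr x g)) = size (Rv x).
Proof. by move=> x0; rewrite /= size_set_nth prednK // maxnn. Qed.

Lemma recv_node_subset (x : Nd) g k :
  {subset nth [::] (Rv x) k <= nth [::] (Rv (recv_node tr x g)) k}.
Proof.
move=> p; rewrite /= nth_set_nth /=; case: eqP => // -> pR.
case: eqP => _; first by rewrite mem_rcons inE pR orbT.
by case: ifP => _ //; rewrite mem_cat pR.
Qed.

(* [bc p k m] reads "p broadcast m at step k".  It is instantiated with the
   execution-wide [bcast ex], so [inv_step] assumes it only of the histories of
   the next state ([hist_sound]). *)
Variable bc : 'I_n -> nat -> M -> Prop.

Definition node_ok (x : Nd) : Prop :=
  [/\ size (Rv x) = (size (hist x)).+1, waiting x -> 2 <= size (Rv x)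
    & 2 <= size (Rv x) -> waiting x = (rcard (cur_R x) < tr)].

(* Index k of [Rv x] holds the paper's R_(k+1), the set collected during step k. *)
Definition sets_sound (x : Nd) : Prop :=
  forall k p m, 0 < k -> (p, m) \in nth [::] (Rv x) k -> bc p k m.

Definition msg_sound (g : Mg) : Prop :=
  [/\ 2 <= mstep g, bc (msrc g) (mstep g).-1 (mbody g)
    & 3 <= mstep g ->
      tr <= rcard (mset g) /\ forall p m, (p, m) \in mset g -> bc p (mstep g).-2 m].

Lemma call_node_ok (x x' : Nd) m : node_ok x -> hist x' = rcons (hist x) m ->
  Rv x' = rcons (Rv x) [::] -> waiting x' = (0 < tr) -> node_ok x'.
Proof.
case=> xs _ _ hE rE wE; rewrite /node_ok /cur_R hE rE wE !size_rcons xs.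
by split => // _; rewrite /= nth_rcons -xs ltnn eqxx.
Qed.

Lemma call_sets_sound (x x' : Nd) : sets_sound x -> Rv x' = rcons (Rv x) [::] -> sets_sound x'.
Proof.
move=> xS rE k p m k0; rewrite rE nth_rcons; case: ifP => [_|_]; first exact: xS.
by case: ifP.
Qed.

Lemma recv_node_ok (x : Nd) g : node_ok x -> waiting x -> node_ok (recv_node tr x g).
Proof.
case=> xs xw xR w; have x2 := xw w.
rewrite /node_ok /cur_R size_recv_node; last exact: leq_trans x2.
by rewrite nth_set_nth /= eqxx.
Qed.

Lemma recv_future_unblocks (x : Nd) g : node_ok x -> waiting x -> msg_sound g ->
  size (Rv x) < mstep g -> ~~ waiting (recv_node tr x g).
Proof.
case=> _ xw _ w [_ _ gR] lt; rewrite /= (gtn_eqF lt) lt -leqNgt.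
have [trR _] := gR (leq_ltn_trans (xw w) lt).
by apply: leq_trans trR _; apply: uniq_leq_size; rewrite ?undup_uniq // => p;
  rewrite !mem_undup mem_cat => ->; rewrite orbT.
Qed.

Lemma recv_node_adds (x : Nd) g : mstep g = size (Rv x) ->
  (msrc g, mbody g) \in nth [::] (Rv (recv_node tr x g)) (size (Rv x)).-1.
Proof. by move=> gs; rewrite /= nth_set_nth /= eqxx gs eqxx mem_rcons mem_head. Qed.

Lemma recv_sets_sound (x : Nd) g : sets_sound x -> 2 <= size (Rv x) -> msg_sound g ->
  mstep g <= (size (Rv x)).+1 -> sets_sound (recv_node tr x g).
Proof.
move=> xS x2 [g2 gB gR] gle k p m k0; rewrite /= nth_set_nth /=.
case: eqP => [ek | _]; last exact: xS.
rewrite {}ek in k0 *; case: eqP => [gs | _].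
  by rewrite mem_rcons inE => /orP[/eqP[-> ->] | ]; [rewrite -gs | exact: xS].
case: ifP => [lt | _]; last exact: xS.
rewrite mem_cat => /orP[| pR]; first exact: xS.
have gs : mstep g = (size (Rv x)).+1 by apply/eqP; rewrite eqn_leq gle lt.
by have [_ /(_ p m pR)] := gR (leq_ltn_trans x2 lt); rewrite gs.
Qed.

Lemma call_msg_sound i (x : Nd) m : node_ok x -> sets_sound x -> ~~ waiting x ->
  bc i (size (Rv x)) m -> msg_sound (call_msg i x m).
Proof.
case=> xs _ xR xS nw Bm; split => //=; first by rewrite xs.
move=> x2; split; first by move: nw; rewrite (xR x2) -leqNgt.
by move=> p pm; apply: xS; lia.
Qed.

Definition sent_by (j : 'I_n) : pred Mg := fun g => msrc g == j.

Definition pend (st : St) (j i : 'I_n) : seq Mg := filter (sent_by j) (inbox st i) ++ chan st j i.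

(* [sidx] is the paper's s = |R|: the k-th call runs with s = k+1.  [next_sidx]
   is the s of the receive loop the node is in, or will enter next. *)
Definition sidx (st : St) (i : 'I_n) : nat := size (Rv (nd st i)).

Definition next_sidx (st : St) (i : 'I_n) : nat := sidx st i + ~~ waiting (nd st i).

(* The step of the oldest message from j not yet processed by i, or that of j's
   next broadcast if there is none. *)
Definition pend_step (st : St) (j i : 'I_n) : nat :=
  if pend st j i is g :: _ then mstep g else (sidx st j).+1.

(* The last clause bounds the step of every message i processes by its own s + 1:
   this makes merging R' sound and lets a later message release i. *)
Definition fifo (st : St) (j i : 'I_n) : Prop :=
  [/\ map (@mstep n M) (pend st j i) = iota (pend_step st j i) (size (pend st j i)),
      ~~ crashed (nd st j) -> pend_step st j i + size (pend st j i) = (sidx st j).+1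
    & (pend st j i != [::]) || ~~ crashed (nd st j) -> pend_step st j i <= (next_sidx st i).+1].

Record tlcr_inv (st : St) : Prop := TlcrInv {
  inv_node : forall i, node_ok (nd st i);
  inv_sets : forall i, sets_sound (nd st i);
  inv_chan : forall j i, {in chan st j i, forall g, msrc g = j /\ msg_sound g};
  inv_inbox : forall i, {in inbox st i, forall g, msg_sound g};
  inv_fifo : forall j i, fifo st j i }.

Definition hist_sound (st : St) : Prop :=
  forall i k m, 0 < k <= size (hist (nd st i)) -> nth m (hist (nd st i)) k.-1 = m -> bc i k m.

Lemma inv_init : tlcr_inv (init n M).
Proof.
split.
- by move=> i; split.
- by move=> i [|k] p m //=; rewrite nth_nil.
- by [].
- by [].
- by move=> j i; split.
Qed.

Lemma head_msg_sound i g rest (st : St) : tlcr_inv st -> inbox st i = g :: rest -> msg_sound g.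
Proof. by move=> stI E; apply: (@inv_inbox _ stI i); rewrite E mem_head. Qed.

Lemma recv_sidx i a (st st' : St) : tlcr_inv st -> apply tr (LRecv M i) st = Some st' ->
  sidx st' a = sidx st a.
Proof.
case=> stN _ _ _ _ /apply_recvE[_ _ [g [rest [_ ->]]]]; rewrite /sidx /= updE.
by case: eqP => [-> | //]; rewrite size_recv_node //; case: (stN i) => -> _ _.
Qed.

Lemma recv_pend i j g rest (st st' : St) : apply tr (LRecv M i) st = Some st' ->
  inbox st i = g :: rest -> msrc g = j -> pend st j i = g :: pend st' j i.
Proof.
case/apply_recvE=> _ _ [g' [rest' [E ->]]]; rewrite E => -[<- _] gj.
by rewrite /pend /sent_by E /= updE eqxx gj eqxx.
Qed.

Lemma recv_head_bound i g rest (st : St) : tlcr_inv st -> waiting (nd st i) ->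
  inbox st i = g :: rest -> mstep g <= (sidx st i).+1.
Proof.
case=> _ _ _ _ stF w E; have [_ _] := stF (msrc g) i.
by rewrite /next_sidx /pend_step /pend /sent_by E /= eqxx w addn0; apply.
Qed.

Lemma recv_next_sidx i g rest (st st' : St) : tlcr_inv st -> apply tr (LRecv M i) st = Some st' ->
  inbox st i = g :: rest -> mstep g <= next_sidx st' i.
Proof.
move=> stI H E; have [_ w [g' [rest' [E' st'E]]]] := apply_recvE H.
move: E'; rewrite E => -[eg _]; subst g'.
have gle := recv_head_bound stI w E.
rewrite /next_sidx (recv_sidx i stI H); case: (ltngtP (mstep g) (sidx st i)) => [lt | gt | ->].
- by rewrite ltnW // ltn_addr.
- have gs : mstep g = (sidx st i).+1 by apply/eqP; rewrite eqn_leq gle gt.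
  suff -> : ~~ waiting (nd st' i) by rewrite addn1 gs.
  rewrite st'E /= updE eqxx recv_future_unblocks //; first exact: inv_node.
  exact: head_msg_sound stI E.
- exact: leq_addr.
Qed.

Lemma next_sidx_mono l (st st' : St) i : tlcr_inv st -> apply tr l st = Some st' ->
  next_sidx st i <= next_sidx st' i.
Proof.
move=> stI H; rewrite /next_sidx /sidx.
case: (node_stepP i H) => [-> | -> | m _ nw _ -> _ | g rest _ w _ ->] //.
- by rewrite size_rcons nw /= addn1 leq_addr.
- by rewrite size_recv_node; [rewrite w /= addn0 leq_addr | case: (inv_node stI i) => ->].
Qed.

Lemma crashed_mono l (st st' : St) i : apply tr l st = Some st' ->
  ~~ crashed (nd st' i) -> ~~ crashed (nd st i).
Proof. by move=> H; case: (node_stepP i H) => [-> | -> | m nc | g rest nc]. Qed.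

Variant pend_spec (l : label n M) (st st' : St) (j i : 'I_n) : Prop :=
  | PendKeep of pend st' j i = pend st j i & sidx st' j = sidx st j \/ crashed (nd st' j)
  | PendSend g of pend st' j i = rcons (pend st j i) g & ~~ crashed (nd st j)
      & sidx st' j = (sidx st j).+1 & mstep g = sidx st' j
  | PendRecv g rest of l = LRecv M i & inbox st i = g :: rest & msrc g = j
      & pend st j i = g :: pend st' j i & sidx st' j = sidx st j.

Lemma pendP l (st st' : St) j i : tlcr_inv st -> apply tr l st = Some st' ->
  pend_spec l st st' j i.
Proof.
move=> stI; case: l => [a m | a m A | a | a b | a] H.
- have [nc _ ->] := apply_callE H; case: (eqVneq j a) => [-> | ja].
    by apply: (@PendSend _ _ _ _ _ (call_msg a (nd st a) m));
      rewrite /pend /sidx /= ?updE ?eqxx ?rcons_cat ?size_rcons.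
  by apply: PendKeep; rewrite /pend /sidx /= ?updE (negbTE ja) //; left.
- have [nc _ ->] := apply_call_crashE H; case: (eqVneq j a) => [-> | ja].
    case iA: (i \in A).
      by apply: (@PendSend _ _ _ _ _ (call_msg a (nd st a) m));
        rewrite /pend /sidx /= ?updE ?eqxx ?iA ?rcons_cat ?size_rcons.
    by apply: PendKeep; rewrite /pend /sidx /= ?updE ?eqxx ?iA //; right.
  by apply: PendKeep; rewrite /pend /sidx /= ?updE (negbTE ja) //; left.
- have [_ ->] := apply_crashE H.
  by apply: PendKeep => //; rewrite /sidx /= updE; left; case: eqP => [-> | ].
- have [g [rest [E ->]]] := apply_deliverE H; apply: PendKeep; last by left.
  have [ga _] : msrc g = a /\ msg_sound g by apply: (@inv_chan _ stI a b); rewrite E mem_head.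
  rewrite /pend /sent_by /= updE; case: (eqVneq i b) => [-> | _]; last by rewrite andbF.
  rewrite andbT filter_rcons ga; case: (eqVneq j a) => [-> | ja] /=; last by [].
  by rewrite cat_rcons E.
- have [_ _ [g [rest [E st'E]]]] := apply_recvE H.
  have sE := recv_sidx j stI H.
  case: (eqVneq i a) => [ia | ia]; last first.
    by apply: PendKeep; [rewrite st'E /pend /= updE (negbTE ia) | left].
  subst a; case: (eqVneq (msrc g) j) => [gj | gj].
    by apply: (PendRecv (g := g) (rest := rest)) => //; apply: recv_pend H E gj.
  by apply: PendKeep; [rewrite st'E /pend /sent_by /= updE eqxx E /= (negbTE gj) | left].
Qed.

Lemma pend_step_pop (st st' : St) j i g : fifo st j i -> pend st j i = g :: pend st' j i ->
  sidx st' j = sidx st j ->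
  [/\ pend_step st j i = mstep g,
      map (@mstep n M) (pend st' j i) = iota (mstep g).+1 (size (pend st' j i))
    & (pend st' j i != [::]) || ~~ crashed (nd st j) -> pend_step st' j i = (mstep g).+1].
Proof.
move=> [stM stS _] pE sE; have ps : pend_step st j i = mstep g by rewrite /pend_step pE.
move: stM stS; rewrite ps pE /= => -[stM] stS; split=> //.
rewrite /pend_step; case: (pend st' j i) stM stS => [|h p] /=; last by case.
by rewrite sE => _ stS /stS; rewrite addn1 => -[->].
Qed.

Lemma fifo_step l (st st' : St) j i : tlcr_inv st -> apply tr l st = Some st' -> fifo st' j i.
Proof.
move=> stI H; have mono := next_sidx_mono i stI H; have cm := crashed_mono (i := j) H.
have [stM stS stB] := inv_fifo stI j i.
case: (pendP j i stI H) => [pE sE | g pE nc sE gE | g rest lE E gj pE sE].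
- have alive : (pend st j i != [::]) || ~~ crashed (nd st' j) ->
      (pend st j i != [::]) || ~~ crashed (nd st j) /\ pend_step st' j i = pend_step st j i.
    rewrite /pend_step pE; case: (pend st j i) => [|h p] //= nc'.
    by case: sE => [-> | c]; [rewrite (cm nc') | rewrite c in nc'].
  split; rewrite pE.
  + case E: (pend st j i) => [|h p] //; rewrite -E (alive _).2 //; by rewrite E.
  + move=> nc'; rewrite (alive _).2 ?nc' ?orbT //.
    by case: sE => [-> | c]; [apply: stS; exact: cm | rewrite c in nc'].
  + by case/alive => /stB le ->; apply: leq_trans le _; rewrite ltnS.
- have ps : pend_step st' j i = pend_step st j i.
    by rewrite /pend_step pE; case: (pend st j i) => [|h p] //=; rewrite gE sE.
  split; rewrite pE ?size_rcons ps.
  + by rewrite map_rcons stM -addn1 iotaD cats1 (stS nc) gE sE.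
  + by move=> _; rewrite addnS (stS nc) sE.
  + by move=> _; apply: leq_trans (stB _) _; rewrite ?nc ?orbT // ltnS.
- have [ps stM' ps'] := pend_step_pop (inv_fifo stI j i) pE sE.
  have alive : (pend st' j i != [::]) || ~~ crashed (nd st' j) -> pend_step st' j i = (mstep g).+1.
    by case/orP => [ne | /cm nc]; apply: ps'; rewrite ?ne ?nc ?orbT.
  split.
  + case E': (pend st' j i) => [|h p] //; rewrite -E' alive //; by rewrite E'.
  + by move=> nc'; rewrite alive ?nc' ?orbT // sE -(stS (cm nc')) ps pE /= addnS addSn.
  + by move/alive => ->; rewrite ltnS; subst l; apply: recv_next_sidx stI H E.
Qed.

Lemma node_inv_step l (st st' : St) i : tlcr_inv st -> apply tr l st = Some st' ->
  node_ok (nd st' i) /\ sets_sound (nd st' i).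
Proof.
move=> stI H; have xN := inv_node stI i; have xS := @inv_sets _ stI i.
case: (node_stepP i H) => [-> | -> | m _ _ hE rE wE | g rest _ w E ->] //.
  by split; [apply: call_node_ok xN hE rE wE | apply: call_sets_sound xS rE].
have [_ x2 _] := xN; split; first exact: recv_node_ok.
apply: recv_sets_sound; [exact: xS | exact: x2 | | exact: recv_head_bound stI w E].
exact: head_msg_sound stI E.
Qed.

Lemma fresh_msg_sound a m (st st' : St) : tlcr_inv st -> hist_sound st' ->
  ~~ waiting (nd st a) -> hist (nd st' a) = rcons (hist (nd st a)) m ->
  msg_sound (call_msg a (nd st a) m).
Proof.
move=> stI hS nw hE; have [xs _ _] := inv_node stI a.
apply: call_msg_sound nw _; [exact: inv_node | exact: (@inv_sets _ stI a) | apply: hS].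
  by rewrite hE size_rcons xs leqnn.
by rewrite hE xs /= nth_rcons ltnn eqxx.
Qed.

Lemma chan_inv_step l (st st' : St) j i : tlcr_inv st -> hist_sound st' ->
  apply tr l st = Some st' ->
  {in chan st' j i, forall g, msrc g = j /\ msg_sound g}.
Proof.
move=> stI hS; have stC := @inv_chan _ stI j i.
case: l => [a m | a m A | a | a b | a] H.
- have [_ nw st'E] := apply_callE H.
  have hE : hist (nd st' a) = rcons (hist (nd st a)) m by rewrite st'E /= updE eqxx.
  move=> g; rewrite st'E /=; case: (eqVneq j a) => [ja | _]; last exact: stC.
  subst j; rewrite mem_rcons inE => /orP[/eqP -> | ]; last exact: stC.
  by split=> //; apply: fresh_msg_sound stI hS nw hE.
- have [_ nw st'E] := apply_call_crashE H.
  have hE : hist (nd st' a) = rcons (hist (nd st a)) m by rewrite st'E /= updE eqxx.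
  move=> g; rewrite st'E /=; case: (eqVneq j a) => [ja | _]; last exact: stC.
  subst j; case: ifP => _; last exact: stC.
  rewrite mem_rcons inE => /orP[/eqP -> | ]; last exact: stC.
  by split=> //; apply: fresh_msg_sound stI hS nw hE.
- by have [_ ->] := apply_crashE H.
- have [g [rest [E ->]]] := apply_deliverE H; move=> g' /=.
  case: ifP => [/andP[/eqP ja /eqP ib] g'R | _]; last exact: stC.
  by apply: stC; rewrite ja ib E inE g'R orbT.
- by have [_ _ [g [rest [_ ->]]]] := apply_recvE H.
Qed.

Lemma inbox_inv_step l (st st' : St) i : tlcr_inv st -> apply tr l st = Some st' ->
  {in inbox st' i, forall g, msg_sound g}.
Proof.
move=> stI; have stB := @inv_inbox _ stI i.
case: l => [a m | a m A | a | a b | a] H.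
- by have [_ _ ->] := apply_callE H.
- by have [_ _ ->] := apply_call_crashE H.
- by have [_ ->] := apply_crashE H.
- have [g [rest [E ->]]] := apply_deliverE H; move=> g' /=; rewrite updE.
  case: eqP => [ib | _]; last exact: stB.
  subst i; rewrite mem_rcons inE => /orP[/eqP -> | ]; last exact: stB.
  by have [] := @inv_chan _ stI a b g; rewrite ?E ?mem_head.
- have [_ _ [g [rest [E ->]]]] := apply_recvE H; move=> g' /=; rewrite updE.
  case: eqP => [ia g'R | _]; last exact: stB.
  by subst i; apply: stB; rewrite E inE g'R orbT.
Qed.

Lemma inv_step l (st st' : St) : tlcr_inv st -> hist_sound st' ->
  apply tr l st = Some st' -> tlcr_inv st'.
Proof.
move=> stI hS H; split=> [i | i | j i | i | j i].
- exact: (node_inv_step i stI H).1.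
- exact: (node_inv_step i stI H).2.
- exact: chan_inv_step stI hS H.
- exact: inbox_inv_step stI H.
- exact: fifo_step stI H.
Qed.

Lemma pend_step_recv i j g rest (st st' : St) : tlcr_inv st ->
  apply tr (LRecv M i) st = Some st' ->
  inbox st i = g :: rest -> msrc g = j -> ~~ crashed (nd st j) ->
  pend_step st j i = mstep g /\ pend_step st' j i = (mstep g).+1.
Proof.
move=> stI H E gj nc.
have [ps _ ps'] := pend_step_pop (inv_fifo stI j i) (recv_pend H E gj) (recv_sidx j stI H).
by split=> //; apply: ps'; rewrite nc orbT.
Qed.

Lemma pend_step_next l (st st' : St) j i : tlcr_inv st -> apply tr l st = Some st' ->
  ~~ crashed (nd st' j) ->
  pend_step st' j i = pend_step st j i \/
  exists g rest, [/\ l = LRecv M i, inbox st i = g :: rest, msrc g = j,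
                     mstep g = pend_step st j i & pend_step st' j i = (mstep g).+1].
Proof.
move=> stI H nc'; have nc := crashed_mono H nc'.
case: (pendP j i stI H) => [pE sE | g pE _ sE gE | g rest lE E gj _ _].
- left; case: sE => [sE | c]; last by rewrite c in nc'.
  by rewrite /pend_step pE sE.
- by left; rewrite /pend_step pE; case: (pend st j i) => [|h p] //=; rewrite gE sE.
- subst l; right; exists g, rest.
  by have [-> ->] := pend_step_recv stI H E gj nc.
Qed.

End Protocol.

Arguments inv_sets {n M tr bc st} _ i.

Section Execution.
Variables (n : nat) (M : eqType) (tr : nat).
Variables (ex : nat -> State n M) (lab : nat -> option (label n M)).
Hypothesis exec : execution tr ex lab.

Lemma exec_step t :
  ex t.+1 = ex t \/ exists2 l, lab t = Some l & apply tr l (ex t) = Some (ex t.+1).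
Proof. by have := exec.2 t; case: (lab t) => [l H | ->]; [right; exists l | left]. Qed.

Lemma exec_apply t l : lab t = Some l -> apply tr l (ex t) = Some (ex t.+1).
Proof. by move=> L; have := exec.2 t; rewrite L. Qed.

Lemma inv_exec t : tlcr_inv tr (bcast ex) (ex t).
Proof.
elim: t => [|t IH]; first by rewrite exec.1; apply: inv_init.
case: (exec_step t) => [-> // | [l _ H]]; apply: inv_step IH _ H.
by move=> i k m /andP[_ le] mE; exists t.+1.
Qed.

Lemma exec_nodeP t i : node_step_spec tr (nd (ex t) i) (nd (ex t.+1) i) (inbox (ex t) i).
Proof. by case: (exec_step t) => [-> | [l _ H]]; [exact: NodeKeep | exact: node_stepP H]. Qed.

Lemma hist_prefix i :
  {homo (fun t => hist (nd (ex t) i)) : t t' / t <= t' >-> prefix t t'}.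
Proof.
apply: homo_leq => [s | ? ? ? | t]; [exact: prefix_refl | exact: prefix_trans |].
case: (exec_nodeP t i) => [-> | -> | m _ _ -> _ _ | g rest _ _ _ ->] //;
  by rewrite ?prefix_rcons ?prefix_refl.
Qed.

Lemma size_hist_mono i t t' :
  t <= t' -> size (hist (nd (ex t) i)) <= size (hist (nd (ex t') i)).
Proof. by move/(hist_prefix i)/size_prefix. Qed.

Lemma sidx_hist t i : sidx (ex t) i = (size (hist (nd (ex t) i))).+1.
Proof. by have [] := inv_node (inv_exec t) i. Qed.

Lemma sidx_mono i t t' : t <= t' -> sidx (ex t) i <= sidx (ex t') i.
Proof. by rewrite !sidx_hist ltnS; apply: size_hist_mono. Qed.

Lemma R_mono i k :
  {homo (fun t => nth [::] (Rv (nd (ex t) i)) k) : t t' / t <= t' >-> {subset t <= t'}}.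
Proof.
apply: homo_leq => [s | ? ? ? xy yz p /xy /yz // | t] //.
case: (exec_nodeP t i) => [-> | -> | m _ _ _ -> _ | g rest _ _ _ ->] //.
- exact: nth_rcons_nil_subset.
- exact: recv_node_subset.
Qed.

Lemma bcast_functional j k m m' : 0 < k -> bcast ex j k m -> bcast ex j k m' -> m = m'.
Proof.
move=> k0 [t1 [le1 e1]] [t2 [le2 e2]].
wlog t12 : t1 t2 m m' le1 le2 e1 e2 / t1 <= t2.
  by move=> W; case: (leqP t1 t2) => [|/ltnW] le; [apply: W le | apply/esym; apply: W le].
have /prefixP[s hE] := hist_prefix j t12.
have lt : k.-1 < size (hist (nd (ex t1) j)) by rewrite prednK.
by rewrite -e1 -e2 hE nth_cat lt (set_nth_default m).
Qed.

Lemma recv_keeps_hist t i : lab t = Some (LRecv M i) ->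
  hist (nd (ex t.+1) i) = hist (nd (ex t) i).
Proof. by move/exec_apply/apply_recvE => [_ _ [g [rest [_ ->]]]]; rewrite /= updE eqxx. Qed.

Lemma return_step i k t : ~~ returned (ex t) i k -> returned (ex t.+1) i k ->
  k = size (hist (nd (ex t.+1) i)) /\ ~~ waiting (nd (ex t.+1) i).
Proof.
rewrite /returned; case: (exec_nodeP t i) => [-> | -> | m _ nw -> _ -> | g rest _ w _ ->] /=.
- by move/negbTE ->.
- by move/negbTE ->.
- rewrite size_rcons (negbTE nw) andbT => /norP[/negP a /negP b] /orP[c | /andP[/eqP -> ->]] //.
  by exfalso; rewrite ltnS leq_eqVlt in c; case/orP: c => [/eqP c | //]; apply: b; rewrite c.
- by rewrite w andbF orbF => /negbTE a /orP[c | /andP[/eqP -> ->]] //; rewrite c in a.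
Qed.

Definition receives t i j x := lab t = Some (LRecv M i) /\
  exists g rest, [/\ inbox (ex t) i = g :: rest, msrc g = j & mstep g = x].

Lemma pend_step_exec t j i : correct ex j ->
  pend_step (ex t.+1) j i = pend_step (ex t) j i \/
  receives t i j (pend_step (ex t) j i) /\
  pend_step (ex t.+1) j i = (pend_step (ex t) j i).+1.
Proof.
move=> cj; case: (exec_step t) => [-> | [l L H]]; first by left.
case: (pend_step_next i (inv_exec t) H (cj t.+1)) => [-> | [g [rest [lE E gj gs ->]]]].
  by left.
by right; rewrite -gs; split=> //; split; [rewrite L lE | exists g, rest].
Qed.

Lemma pend_step_mono j i : correct ex j ->
  {homo (fun t => pend_step (ex t) j i) : t t' / t <= t' >-> t <= t'}.
Proof.
move=> cj; apply: homo_leq => [s | ? ? ? | t]; [exact: leqnn | exact: leq_trans |].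
by case: (pend_step_exec t i cj) => [-> | [_ ->]].
Qed.

Lemma receives_between j i x t t' : correct ex j ->
  pend_step (ex t) j i <= x < pend_step (ex t') j i ->
  exists2 t0, t <= t0 < t' & receives t0 i j x.
Proof.
move=> cj; elim: t' => [|t' IH] /andP[ux xu].
  by have := pend_step_mono i cj (leq0n t); lia.
case: (ltnP x (pend_step (ex t') j i)) => [xu' | ux'].
  have [t0 /andP[tt0 t0t'] r] := IH (introT andP (conj ux xu')).
  by exists t0; rewrite // tt0 ltnS (ltnW t0t').
case: (pend_step_exec t' i cj) => [e | [r e]]; first by rewrite e ltnNge ux' in xu.
have xE : x = pend_step (ex t') j i.
  by apply/eqP; rewrite eqn_leq ux' andbT -ltnS -e.
exists t'; last by rewrite xE.
rewrite ltnS leqnn andbT leqNgt; apply/negP => /(pend_step_mono i cj); lia.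
Qed.

Lemma stuck_hist i k t : (forall t, ~~ returned (ex t) i k) -> size (hist (nd (ex t) i)) <= k.
Proof. by move/(_ t); rewrite /returned negb_or -leqNgt => /andP[]. Qed.

Lemma stuck_waiting i k t0 t : (forall t, ~~ returned (ex t) i k) ->
  k <= size (hist (nd (ex t0) i)) -> t0 <= t ->
  size (hist (nd (ex t) i)) = k /\ waiting (nd (ex t) i).
Proof.
move=> st h0 le; have e : size (hist (nd (ex t) i)) = k.
  by apply/eqP; rewrite eqn_leq (stuck_hist t st) (leq_trans h0 (size_hist_mono i le)).
by split=> //; move: (st t); rewrite /returned e ltnn eqxx /=; case: waiting.
Qed.

Lemma stuck_receives_le i k j x t : (forall t, ~~ returned (ex t) i k) ->
  receives t i j x -> x <= k.+1.
Proof.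
move=> st [L [g [rest [E _ <-]]]]; have stI := inv_exec t.
have [_ w [g' [rest' [E' st'E]]]] := apply_recvE (exec_apply L).
move: E'; rewrite E => -[eg _]; subst g'.
have gle := recv_head_bound stI w E; rewrite sidx_hist in gle.
rewrite leqNgt; apply/negP => gt.
have hk : size (hist (nd (ex t) i)) = k by have := stuck_hist t st; lia.
have nw : ~~ waiting (nd (ex t.+1) i).
  rewrite st'E /= updE eqxx (recv_future_unblocks (bc := bcast ex)) //.
  - exact: (inv_node stI i).
  - exact: head_msg_sound stI E.
  - by rewrite -/(sidx (ex t) i) sidx_hist hk.
by move: (st t.+1); rewrite /returned (recv_keeps_hist L) hk ltnn eqxx nw.
Qed.

Lemma stuck_receives_current i k j t0 t : (forall t, ~~ returned (ex t) i k) ->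
  k <= size (hist (nd (ex t0) i)) -> t0 <= t -> receives t i j k.+1 ->
  exists m, (j, m) \in nth [::] (Rv (nd (ex t.+1) i)) k.
Proof.
move=> st h0 le [L [g [rest [E gj gs]]]].
have [_ _ [g' [rest' [E' ->]]]] := apply_recvE (exec_apply L).
move: E'; rewrite E => -[eg _]; subst g'.
have [hk _] := stuck_waiting st h0 le.
have sE : size (Rv (nd (ex t) i)) = k.+1 by rewrite -/(sidx (ex t) i) sidx_hist hk.
exists (mbody g); rewrite /= updE eqxx -gj.
by have := @recv_node_adds _ _ tr (nd (ex t) i) g; rewrite sE; apply.
Qed.

Hypothesis fr : fair ex lab.

Lemma next_call i k t : correct ex i -> returned (ex t) i k ->
  exists t', k < size (hist (nd (ex t') i)).
Proof.
move=> ci; case/orP => [lt | /andP[/eqP kE w]]; first by exists t.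
have [_ [_ F3]] := fr; have [t1 tt1 [m L]] := F3 t i ci w.
have [_ _ st'E] := apply_callE (exec_apply L).
exists t1.+1; rewrite st'E /= updE eqxx /= size_rcons ltnS kE.
exact: size_hist_mono.
Qed.

Lemma inbox_grows t i : lab t <> Some (LRecv M i) ->
  prefix (inbox (ex t) i) (inbox (ex t.+1) i).
Proof.
move=> nr; case: (exec_step t) => [-> | [l L H]]; first exact: prefix_refl.
case: l L H => [a m | a m A | a | a b | a] L H.
- by have [_ _ ->] := apply_callE H; apply: prefix_refl.
- by have [_ _ ->] := apply_call_crashE H; apply: prefix_refl.
- by have [_ ->] := apply_crashE H; apply: prefix_refl.
- have [g [rest [_ ->]]] := apply_deliverE H; rewrite /= updE.
  by case: eqP => [-> | _]; [apply: prefix_rcons | apply: prefix_refl].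
- have [_ _ [g [rest [_ ->]]]] := apply_recvE H; rewrite /= updE.
  by case: eqP => [ia | _]; [case: nr; rewrite L ia | apply: prefix_refl].
Qed.

Lemma inbox_grows_until i t t' : t <= t' ->
  (forall s, t <= s < t' -> lab s <> Some (LRecv M i)) ->
  prefix (inbox (ex t) i) (inbox (ex t') i).
Proof.
elim: t' => [|t' IH]; first by rewrite leqn0 => /eqP -> _; apply: prefix_refl.
rewrite leq_eqVlt => /orP[/eqP -> _ | lt nr]; first exact: prefix_refl.
have nr' s : t <= s < t' -> lab s <> Some (LRecv M i).
  by case/andP=> ts st; apply: nr; rewrite ts ltnW.
by apply: prefix_trans (IH lt nr') (inbox_grows (nr t' _)); rewrite -ltnS lt ltnSn.
Qed.

Section Receiver.
Variables (i : 'I_n) (T : nat).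
Hypothesis ci : correct ex i.
Hypothesis wT : forall t, T <= t -> waiting (nd (ex t) i).

Lemma recv_from_inbox j t : T <= t -> has (sent_by j) (inbox (ex t) i) ->
  exists2 t', t <= t' & exists x, receives t' i j x.
Proof.
move eq_q : (find (sent_by j) (inbox (ex t) i)) => q.
elim/ltn_ind: q t eq_q => q IH t qE Tt hj.
have [_ [F2 _]] := fr.
have ne : inbox (ex t) i <> [::] by case: (inbox (ex t) i) hj.
have [t1 tt1 L1] := F2 t i ci (wT Tt) ne.
have [t0 [tt0 L0 before]] := least_after (P := fun s => lab s = Some (LRecv M i)) tt1 L1.
have /prefixP[s inbE] := inbox_grows_until tt0 before.
have [_ _ [g [rest [E st'E]]]] := apply_recvE (exec_apply L0).
have inb' : inbox (ex t0.+1) i = rest by rewrite st'E /= updE eqxx.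
have := congr1 (find (sent_by j)) inbE; have := congr1 (has (sent_by j)) inbE.
rewrite find_cat has_cat hj qE E /=; case: ifP => [/eqP gj _ _ | _ hr qr].
  by exists t0 => //; exists (mstep g); split=> //; exists g, rest.
have lt : find (sent_by j) rest < q by rewrite -qr.
have Tt0 : T <= t0.+1 by apply: leq_trans Tt (leq_trans tt0 (leqnSn t0)).
have [t' t0t' r] := IH _ lt t0.+1 (congr1 _ inb') Tt0 (etrans (congr1 _ inb') hr).
by exists t' => //; apply: leq_trans tt0 (ltnW t0t').
Qed.

Lemma recv_from_pend j t : T <= t -> pend (ex t) j i <> [::] ->
  exists2 t', t <= t' & exists x, receives t' i j x.
Proof.
move=> Tt; case hj: (has (sent_by j) (inbox (ex t) i)).
  by move=> _; apply: recv_from_inbox hj.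
rewrite /pend; move: hj; rewrite has_filter => /negbFE/eqP -> /= chne.
have [F1 _] := fr; have [t1 tt1 L1] := F1 t j i ci chne.
have [g [rest [E st'E]]] := apply_deliverE (exec_apply L1).
have [gj _] : msrc g = j /\ msg_sound tr (bcast ex) g.
  by apply: (@inv_chan _ _ _ _ _ (inv_exec t1) j i); rewrite E mem_head.
have hj' : has (sent_by j) (inbox (ex t1.+1) i).
  by rewrite st'E /= updE eqxx has_rcons /sent_by gj eqxx.
have [|t' t1t' r] := recv_from_inbox (t := t1.+1) _ hj'.
  exact: leq_trans Tt (leq_trans tt1 (leqnSn t1)).
by exists t' => //; apply: leq_trans tt1 (ltnW t1t').
Qed.

Lemma pend_step_exceeds j x t : correct ex j -> T <= t -> x <= sidx (ex t) j ->
  exists2 t', t <= t' & x < pend_step (ex t') j i.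
Proof.
move=> cj; move ed : (x - pend_step (ex t) j i) => d.
elim/ltn_ind: d t ed => d IH t ed Tt xs.
case: (ltnP x (pend_step (ex t) j i)) => [lt | ux]; first by exists t.
have ne : pend (ex t) j i <> [::].
  have [_ /(_ (cj t)) e _] := inv_fifo (inv_exec t) j i.
  by move=> pE; move: e; rewrite pE /= addn0 => e; move: ux xs; rewrite e; lia.
have [t1 tt1 [y [L [g [rest [E gj _]]]]]] := recv_from_pend Tt ne.
have [ps ps'] := pend_step_recv (inv_exec t1) (exec_apply L) E gj (cj t1).
have le1 := pend_step_mono i cj tt1.
case: (ltnP x (pend_step (ex t1.+1) j i)) => [lt | ux'].
  by exists t1.+1 => //; apply: leq_trans tt1 (leqnSn t1).
have lt : x - pend_step (ex t1.+1) j i < d by rewrite -ed; lia.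
have Tt1 : T <= t1.+1 by apply: leq_trans Tt (leq_trans tt1 (leqnSn t1)).
have xs1 : x <= sidx (ex t1.+1) j by apply: leq_trans xs (sidx_mono j (leq_trans tt1 (leqnSn t1))).
have [t' t1t' xt'] := IH _ lt t1.+1 erefl Tt1 xs1.
by exists t' => //; apply: leq_trans tt1 (ltnW t1t').
Qed.

Lemma receives_step j x t t2 : correct ex j -> T <= t ->
  pend_step (ex t) j i <= x -> x <= sidx (ex t2) j -> exists2 t', t <= t' & receives t' i j x.
Proof.
move=> cj Tt ux xs.
have xs3 : x <= sidx (ex (maxn t t2)) j by apply: leq_trans xs (sidx_mono j (leq_maxr t t2)).
have [t' _ xu] := pend_step_exceeds cj (leq_trans Tt (leq_maxl t t2)) xs3.
have [t0 /andP[tt0 _] r] := receives_between cj (introT andP (conj ux xu)).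
by exists t0.
Qed.

End Receiver.

Lemma stuck_from i k t0 : (forall t, ~~ returned (ex t) i k) ->
  k <= size (hist (nd (ex t0) i)) -> forall t, t0 <= t -> waiting (nd (ex t) i).
Proof. by move=> st h0 t le; have [] := stuck_waiting st h0 le. Qed.

Lemma peer_return_unblocks i j k t0 tj : correct ex i -> correct ex j ->
  k.+1 <= size (hist (nd (ex t0) i)) -> returned (ex tj) j k.+1 ->
  exists t, returned (ex t) i k.+1.
Proof.
move=> ci cj h0 rj; apply: NNPP => nr.
have st t : ~~ returned (ex t) i k.+1 by apply/negP => r; apply: nr; exists t.
have never t : ~ receives t i j k.+3 by move/(stuck_receives_le st); rewrite ltnn.
have [tc hc] := next_call cj rj.
have bound : pend_step (ex t0) j i <= k.+3.
  rewrite leqNgt; apply/negP => lt.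
  have : pend_step (ex 0) j i <= k.+3 < pend_step (ex t0) j i by rewrite exec.1 lt.
  by case/(receives_between cj) => s _ /never.
have tc3 : k.+3 <= sidx (ex tc) j by rewrite sidx_hist ltnS.
by have [s _ /never] := receives_step ci (stuck_from st h0) cj (leqnn t0) bound tc3.
Qed.

Lemma pend_step_le_sidx t j i : correct ex j -> pend_step (ex t) j i <= (sidx (ex t) j).+1.
Proof. by move=> cj; have [_ /(_ (cj t)) <- _] := inv_fifo (inv_exec t) j i; apply: leq_addr. Qed.

Lemma first_caller k (C : {set 'I_n}) j1 t : j1 \in C -> k.+1 <= size (hist (nd (ex t) j1)) ->
  exists j0 t1, [/\ j0 \in C, k.+1 <= size (hist (nd (ex t1.+1) j0)),
    lab t1 <> Some (LRecv M j0) & {in C, forall j, size (hist (nd (ex t1) j)) <= k}].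
Proof.
move=> j1C h1.
pose P s := exists2 j, j \in C & k.+1 <= size (hist (nd (ex s) j)).
have [t0 [_ [j0 j0C h0] before]] := least_after (P := P) (leq0n t) (ex_intro2 _ _ j1 j1C h1).
case: t0 h0 before => [|t1] h0 before; first by move: h0; rewrite exec.1.
have early : {in C, forall j, size (hist (nd (ex t1) j)) <= k}.
  move=> j jC; rewrite leqNgt; apply/negP => h.
  by apply: (before t1); [rewrite leq0n ltnSn | exists j].
exists j0, t1; split=> // L.
by move: (early j0 j0C); rewrite -(recv_keeps_hist L) leqNgt h0.
Qed.

Lemma stuck_collects j0 j k t1 : correct ex j0 -> correct ex j ->
  (forall t, ~~ returned (ex t) j0 k.+1) -> k.+1 <= size (hist (nd (ex t1) j0)) ->
  pend_step (ex t1) j j0 <= k.+2 -> (exists tj, k.+1 <= size (hist (nd (ex tj) j))) ->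
  exists t, forall t', t <= t' -> exists m, (j, m) \in nth [::] (Rv (nd (ex t') j0)) k.+1.
Proof.
move=> c0 cj st h0 ub [tj hj].
have xs : k.+2 <= sidx (ex tj) j by rewrite sidx_hist ltnS.
have [t' tt' r] := receives_step c0 (stuck_from st h0) cj (leqnn _) ub xs.
have [m jm] := stuck_receives_current st h0 tt' r.
by exists t'.+1 => t'' le; exists m; exact: (R_mono le).
Qed.

Lemma stuck_round_impossible k (C : {set 'I_n}) j1 :
  j1 \in C -> tr <= #|C| -> {in C, forall j, correct ex j} ->
  {in C, forall j, exists t, k.+1 <= size (hist (nd (ex t) j))} ->
  {in C, forall j t, ~~ returned (ex t) j k.+1} -> False.
Proof.
move=> j1C trC cC calls none; have [tc h1] := calls j1 j1C.
have [j0 [t1 [j0C h0 nrecv early]]] := first_caller j1C h1.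
have st0 := none j0 j0C.
have collect j : j \in C ->
    exists t, forall t', t <= t' -> exists m, (j, m) \in nth [::] (Rv (nd (ex t') j0)) k.+1.
  move=> jC; apply: stuck_collects (cC j0 j0C) (cC j jC) st0 h0 _ (calls j jC).
  have := pend_step_le_sidx t1 j0 (cC j jC); rewrite sidx_hist.
  case: (pend_step_exec t1 j0 (cC j jC)) => [-> | [[L _] _]]; last by case: nrecv.
  by have := early j jC; lia.
have [T HT] := eventually_forall collect; set tT := maxn T t1.+1.
have [hk w] := stuck_waiting st0 h0 (leq_maxr T t1.+1).
have [xs _ xR] := inv_node (inv_exec tT) j0.
have lowR : #|C| <= rcard (nth [::] (Rv (nd (ex tT) j0)) k.+1).
  by apply: card_le_size_undup => j jC; apply: HT jC (leq_maxl _ _).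
by move: w; rewrite xR ?xs ?hk // /cur_R xs hk /=; lia.
Qed.

Lemma correct_returns (C : {set 'I_n}) k i : tr <= #|C| -> {in C, forall j, correct ex j} ->
  correct ex i -> exists t, returned (ex t) i k.
Proof.
move=> trC cC; elim: k i => [|k IH] i ci; first by exists 0; rewrite exec.1.
have calls j : correct ex j -> exists t, k.+1 <= size (hist (nd (ex t) j)).
  by move=> cj; have [t r] := IH j cj; apply: next_call cj r.
have [t0 h0] := calls i ci.
case: (classic (exists j t, correct ex j /\ returned (ex t) j k.+1)) => [[j [t [cj rj]]] | none].
  exact: peer_return_unblocks ci cj h0 rj.
have cC' : {in i |: C, forall j, correct ex j} by move=> j /setU1P[-> | /cC].
exfalso; apply: (@stuck_round_impossible k (i |: C) i (setU11 i C)).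
- exact: leq_trans trC (subset_leq_card (subsetUr _ _)).
- exact: cC'.
- by move=> j /cC' /calls.
- by move=> j /cC' cj t; apply/negP => r; apply: none; exists j, t.
Qed.

Lemma returned_R_sound i k t : 0 < k -> ~~ returned (ex t) i k -> returned (ex t.+1) i k ->
  tr <= rcard (nth [::] (Rv (nd (ex t.+1) i)) k) /\
  forall p m, (p, m) \in nth [::] (Rv (nd (ex t.+1) i)) k -> bcast ex p k m.
Proof.
move=> k0 nr r; have [kE nw] := return_step nr r.
have [xs _ xR] := inv_node (inv_exec t.+1) i.
split; last by move=> p m; apply: (inv_sets (inv_exec t.+1) i k p m k0).
by move: nw; rewrite xR ?xs -?kE // -leqNgt /cur_R xs -kE.
Qed.

Lemma receive_threshold i k t : 0 < k -> ~~ returned (ex t) i k -> returned (ex t.+1) i k ->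
  exists NR : {set 'I_n}, tr <= #|NR| /\ (forall j, j \in NR -> exists m, bcast ex j k m) /\
    (forall m, tlcrR (ex t.+1) i k m <-> exists2 j, j \in NR & bcast ex j k m).
Proof.
move=> k0 nr r; have [trR sound] := returned_R_sound k0 nr r.
set R := nth [::] (Rv (nd (ex t.+1) i)) k in trR sound *.
have fst_inj : {in R &, injective fst}.
  move=> [p m] [p' m'] pR p'R /= pp; subst p'.
  by rewrite (bcast_functional k0 (sound _ _ pR) (sound _ _ p'R)).
exists [set p | p \in map fst R]; split; last split.
- exact: leq_trans trR (size_undup_le_card_fst fst_inj).
- by move=> j; rewrite inE => /mapP[[p m] pR ->]; exists m; apply: sound.
- move=> m; split=> [[j jR] | [j]].
    by exists j; [rewrite inE; apply/mapP; exists (j, m) | apply: sound].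
  rewrite inE => /mapP[[p m'] pR /= ->] bm; exists p.
  by rewrite (bcast_functional k0 bm (sound _ _ pR)).
Qed.

End Execution.

Lemma correct_quorum n (M : eqType) (ex : nat -> State n M) tr f :
  tr <= n -> f <= n - tr -> at_most_fail f ex ->
  exists C : {set 'I_n}, tr <= #|C| /\ {in C, forall j, correct ex j}.
Proof.
move=> trn fn [F [cardF Fcr]]; exists (~: F); split.
  by have := cardsC F; rewrite card_ord; lia.
by move=> j; rewrite inE => jF t; apply/negP => /Fcr; apply/negP.
Qed.

Theorem theorem2 (n tr f : nat) (M : eqType)
    (ex : nat -> State n M) (lab : nat -> option (label n M)) :
  tr <= n -> f <= n - tr ->
  execution tr ex lab -> fair ex lab -> at_most_fail f ex ->
  TSB tr 0 0 ex (@tlcrR n M) (@tlcrB n M).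
Proof.
move=> trn fn exec fr fail; have [C [trC cC]] := correct_quorum trn fn fail.
split=> [i k _ _ | i k t k0 nr r].
  case: (classic (correct ex i)) => [ci | /not_all_ex_not[t c]].
    by have [t r] := correct_returns exec fr k trC cC ci; exists t; left.
  by exists t; right; apply/negPn/negP.
split; first exact: (receive_threshold exec k0 nr r).
split; last by move=> m [].
exists set0; split=> //; split=> [j | m]; first by rewrite in_set0.
by split=> [[] | [j]]; rewrite in_set0.
Qed.
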